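(* Let $g_1:L_s\to[0,1]$ and $g_2:L_r\to[0,1]$ (with $s,r\ge2$ integers) be continuous encodings of $[0,1]$ with zero redundancy, and write $\Delta^{g_1}_{\alpha_1\alpha_2\dots}=g_1((\alpha_n))$, $\Delta^{g_2}_{\beta_1\beta_2\dots}=g_2((\beta_n))$. For each $n\ge1$ let $\varphi_n:A_s^n\to A_r$ be a function, and consider the rule $$\psi\big(x=\Delta^{g_1}_{\alpha_1\alpha_2\dots\alpha_n\dots}\big)=\Delta^{g_2}_{\beta_1\beta_2\dots\beta_n\dots},\qquad \beta_n=\varphi_n(\alpha_1,\dots,\alpha_n).$$ Then $\psi$ is (defined and) continuous at every point of $[0,1]$ if and only if $\psi$ is well defined at every $g_1$-binary point, i.e. for every $g_1$-binary point $x$ the two $g_1$-codes of $x$ yield the same value of the right-hand side.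
   Context: $A_s=\{0,1,\dots,s-1\}$ and $L_s=A_s\times A_s\times\cdots$ is the space of sequences over $A_s$ (similarly $A_r$, $L_r$). An encoding of $[0,1]$ with alphabet $A_s$ is a surjective map $g:L_s\to[0,1]$; if $g((\alpha_n))=x$, $(\alpha_n)$ is a $g$-code of $x$. The $g$-cylinder of rank $m$ with base $c_1\dots c_m$ is $\Delta^g_{c_1\dots c_m}=\{g((c_1,\dots,c_m,\alpha_1,\alpha_2,\dots)):(\alpha_n)\in L_s\}$. The encoding has zero redundancy if every point has at most two $g$-codes and the set of points with two $g$-codes is at most countable; points with two codes are $g$-binary, points with one code are $g$-unary. The encoding is continuous if every $g$-cylinder is an interval and any two distinct cylinders of the same rank have no common interior points. *)

From HB Require Import structures.
From mathcomp Require Import all_boot all_order all_algebra.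
From mathcomp Require Import all_classical all_reals all_analysis.
Set Implicit Arguments. Unset Strict Implicit. Unset Printing Implicit Defensive.
Import Order.TTheory GRing.Theory Num.Theory.
Import numFieldNormedType.Exports.
Local Open Scope classical_set_scope.
Local Open Scope ring_scope.

(* L_s : sequences over A_s = {0,...,s-1}; index 0 is the first digit alpha_1 *)
Definition Lseq (s : nat) := nat -> 'I_s.

Definition prepend (s : nat) (c : seq 'I_s) (a : Lseq s) : Lseq s :=
  fun n => if (n < size c)%N then nth (a 0%N) c n else a (n - size c)%N.

Definition cylinder (R : realType) (s : nat) (g : Lseq s -> R) (c : seq 'I_s)
  : set R := [set g (prepend c a) | a in [set: Lseq s]].

Definition encoding (R : realType) (s : nat) (g : Lseq s -> R) : Prop :=
  (forall a, 0 <= g a <= 1) /\ (forall x : R, 0 <= x <= 1 -> exists a, g a = x).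

Definition g_binary (R : realType) (s : nat) (g : Lseq s -> R) (x : R) : Prop :=
  exists a b, a <> b /\ g a = x /\ g b = x.

Definition zero_redundancy (R : realType) (s : nat) (g : Lseq s -> R) : Prop :=
  (forall a b c, g a = g b -> g b = g c -> a = b \/ a = c \/ b = c) /\
  countable [set x | g_binary g x].

Definition continuous_encoding (R : realType) (s : nat) (g : Lseq s -> R) : Prop :=
  (forall c : seq 'I_s, is_interval (cylinder g c)) /\
  (forall c c' : seq 'I_s, size c = size c' -> c <> c' ->
     (cylinder g c)° `&` (cylinder g c')° = set0).

Definition digit_map (s r : nat)
  (phi : forall n : nat, n.+1.-tuple 'I_s -> 'I_r) (a : Lseq s) : Lseq r :=
  fun n => phi n [tuple a (val i) | i < n.+1].

From HB Require Import structures.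
From mathcomp Require Import all_boot all_order all_algebra.
From mathcomp Require Import all_classical all_reals all_analysis.
From mathcomp Require Import lra.
Import Order.TTheory GRing.Theory Num.Theory.
Import numFieldNormedType.Exports.
Local Open Scope classical_set_scope.
Local Open Scope ring_scope.

Set Implicit Arguments.
Unset Strict Implicit.
Unset Printing Implicit Defensive.

(* Only two properties of the encodings matter: a point has at most two codes,
   and cylinders are intervals.  Together they make an encoding g continuous
   for the product topology on codes (a cylinder around a that stays far from
   g a would, by convexity, force a third code) and make every cylinder closed
   (Koenig's lemma on the finitely branching tree of cylinders).  Hence the
   finitely many rank-N cylinders missing x also miss a neighbourhood of x, so
   every code of a point near x shares its first N digits with one of the at
   most two codes of x.  As beta_n only depends on alpha_1 .. alpha_n, the
   continuity of g2 then yields the continuity of psi as soon as psi is well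
   defined at the g1-binary points. *)

Lemma exists_factor (A B C : Type) (c0 : C) (f : A -> B) (h : A -> C) :
  (forall a b, f a = f b -> h a = h b) -> exists k : B -> C, forall a, k (f a) = h a.
Proof.
move=> fh; have /boolp.choice [k kP] : forall y, exists z, forall a, f a = y -> z = h a.
  move=> y; have [[a <-]|nofiber] := pselect (exists a, f a = y).
    by exists (h a) => b /fh ->.
  by exists c0 => a fay; case: nofiber; exists a.
by exists k => a; exact: kP.
Qed.

Lemma closure_bigcup_finite (T : topologicalType) (I : finType) (F : I -> set T) :
  closure (\bigcup_i F i) `<=` \bigcup_i closure (F i).
Proof.
move=> x clx; apply: contrapT => notcl.
have far : \forall y \near x, forall i, ~ F i y.
  apply: filter_forall => i.
  have /existsNP [B /not_implyP [Bx FB0]] : ~ closure (F i) x.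
    by move=> cl; apply: notcl; exists i.
  by apply: filterS Bx => y By Fy; apply: FB0; exists y.
have [y [[i _ Fiy] yfar]] := clx _ far.
exact: yfar i Fiy.
Qed.

Definition prefix_eq (s N : nat) (a b : Lseq s) := forall i, (i < N)%N -> a i = b i.

Lemma prefix_eq_le (s M N : nat) (a b : Lseq s) :
  (M <= N)%N -> prefix_eq N a b -> prefix_eq M a b.
Proof. by move=> MN ab i iM; apply: ab; exact: leq_trans iM MN. Qed.

Definition prefix_continuous (R : numDomainType) (s : nat) (h : Lseq s -> R) :=
  forall a e, 0 < e -> exists N, forall b, prefix_eq N a b -> `|h a - h b| < e.

Lemma prefix_eq_digit_map (s r N : nat) (phi : forall n, n.+1.-tuple 'I_s -> 'I_r)
    (a b : Lseq s) :
  prefix_eq N a b -> prefix_eq N (digit_map phi a) (digit_map phi b).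
Proof.
move=> ab n nN; rewrite /digit_map; congr phi; apply: eq_mktuple => i.
by apply: ab; exact: leq_trans (ltn_ord i) nN.
Qed.

Lemma prefix_continuous_digit_map (R : numDomainType) (s r : nat)
    (phi : forall n, n.+1.-tuple 'I_s -> 'I_r) (h : Lseq r -> R) :
  prefix_continuous h -> prefix_continuous (h \o digit_map phi).
Proof.
move=> hc a e e0; have [N hN] := hc (digit_map phi a) e e0.
by exists N => b /(prefix_eq_digit_map phi) /hN.
Qed.

Section Cylinders.
Variables (R : realType) (s : nat) (g : Lseq s -> R).
Hypothesis g_two_codes : forall a b c, g a = g b -> g b = g c -> a = b \/ a = c \/ b = c.
Hypothesis g_cylinder_interval : forall c : seq 'I_s, is_interval (cylinder g c).

Definition cyl N (a : Lseq s) : set R := [set g b | b in prefix_eq N a].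

Lemma cylinder_mkseq N a : cylinder g (mkseq a N) = cyl N a.
Proof.
apply/seteqP; split => y.
  case=> t _ <-; exists (prepend (mkseq a N) t) => //.
  by move=> i iN; rewrite /prepend size_mkseq iN nth_mkseq.
case=> b ab <-; exists (fun n => b (n + N)%N) => //.
congr g; apply: funext => n; rewrite /prepend size_mkseq.
by case: ltnP => nN; [rewrite nth_mkseq // ab | rewrite subnK].
Qed.

Lemma cyl_interval N a : is_interval (cyl N a).
Proof. by rewrite -cylinder_mkseq. Qed.

Lemma cyl_center N a : cyl N a (g a).
Proof. by exists a. Qed.

Lemma cyl_le M N a : (M <= N)%N -> cyl N a `<=` cyl M a.
Proof. by move=> MN _ [b ab <-]; exists b => //; exact: prefix_eq_le ab. Qed.

Lemma cyl_prefix_eq N a b : prefix_eq N a b -> cyl N a = cyl N b.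
Proof.
move=> ab; apply/seteqP; split => _ [c pc <-]; exists c => // i iN.
  by rewrite -ab // pc.
by rewrite ab // pc.
Qed.

Lemma bigcap_cyl a : \bigcap_N cyl N a = [set g a].
Proof.
apply/seteqP; split => [y ycyl|_ ->]; last by move=> N _; exact: cyl_center.
apply: contrapT => yNa.
have code_at N : exists2 b, prefix_eq N a b & g b = y by exact: ycyl.
have differs b : g b = y -> exists k, b k <> a k.
  by move=> gby; apply/existsNP => ba; apply: yNa; rewrite -gby (funext ba).
have [b0 _ gb0] := code_at 0%N; have [k0 bk0] := differs b0 gb0.
have [b1 ab1 gb1] := code_at k0.+1; have [k1 bk1] := differs b1 gb1.
have [b2 ab2 gb2] := code_at (maxn k0 k1).+1.
(* b0, b1, b2 are distinct: b1 and b2 agree with a at k0, and b2 also at k1. *)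
have b1k0 : b1 k0 = a k0 by rewrite ab1.
have b2k0 : b2 k0 = a k0 by rewrite ab2 // ltnS leq_maxl.
have b2k1 : b2 k1 = a k1 by rewrite ab2 // ltnS leq_maxr.
have [e|[e|e]] := g_two_codes (etrans gb0 (esym gb1)) (etrans gb1 (esym gb2)).
- by rewrite e b1k0 in bk0.
- by rewrite e b2k0 in bk0.
- by rewrite e b2k1 in bk1.
Qed.

Lemma encoding_prefix_continuous : prefix_continuous g.
Proof.
move=> a e e0; apply: contrapT => /forallNP farN.
have far N : exists2 b, prefix_eq N a b & e <= `|g a - g b|.
  have /existsNP [b /not_implyP [ab /negP]] := farN N.
  by rewrite -leNgt; exists b.
(* By convexity, every cylinder around a contains yp or ym. *)
pose yp := g a + e / 2; pose ym := g a - e / 2.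
have side N : cyl N a yp \/ cyl N a ym.
  have [b ab eb] := far N.
  have gb : cyl N a (g b) by exists b.
  have [ab_le|ab_gt] := lerP (g a) (g b).
  - left; apply: (cyl_interval (cyl_center N a) gb).
    rewrite ler0_norm in eb; last by lra.
    by apply/andP; split; rewrite /yp; lra.
  - right; apply: (cyl_interval gb (cyl_center N a)).
    rewrite ger0_norm in eb; last by lra.
    by apply/andP; split; rewrite /ym; lra.
have [allp|/existsNP [N0 notp]] := pselect (forall N, cyl N a yp).
  have : (\bigcap_N cyl N a) yp by move=> N _; exact: allp.
  by rewrite bigcap_cyl /yp => /=; lra.
have allm N : cyl N a ym.
  case: (side (maxn N N0)) => [/(cyl_le (leq_maxr N N0)) //|].
  exact/(cyl_le (leq_maxl N N0)).
have : (\bigcap_N cyl N a) ym by move=> N _; exact: allm.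
by rewrite bigcap_cyl /ym => /=; lra.
Qed.

Definition set_digit (a : Lseq s) n (j : 'I_s) : Lseq s :=
  fun i => if i == n then j else a i.

Lemma cyl_split n a : cyl n a = \bigcup_j cyl n.+1 (set_digit a n j).
Proof.
have a_aj j : prefix_eq n a (set_digit a n j).
  by move=> i ilt; rewrite /set_digit ltn_eqF.
apply/seteqP; split => [_ [b ab <-]|y [j _]].
  exists (b n) => //; exists b => // i; rewrite ltnS leq_eqVlt.
  by case/orP => [/eqP ->|ilt]; rewrite /set_digit ?eqxx // ltn_eqF // ab.
by move/(cyl_le (leqnSn n)); rewrite -(cyl_prefix_eq (a_aj j)).
Qed.

Lemma closure_cyl_branch n a x : closure (cyl n a) x ->
  exists2 d, prefix_eq n a d & forall m, closure (cyl m d) x.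
Proof.
move=> cl.
have /boolp.choice [next nextP] : forall b, exists next_b : nat -> 'I_s, forall k,
    closure (cyl k b) x -> closure (cyl k.+1 (set_digit b k (next_b k))) x.
  move=> b; suff /boolp.choice [next_b ?] : forall k, exists j : 'I_s,
      closure (cyl k b) x -> closure (cyl k.+1 (set_digit b k j)) x by exists next_b.
  move=> k; have [|notcl] := pselect (closure (cyl k b) x); last by exists (b k).
  by rewrite cyl_split => /closure_bigcup_finite [j _ clj]; exists j.
pose branch := fix branch k :=
  if k is k'.+1 then set_digit (branch k') (n + k')%N (next (branch k') (n + k')%N) else a.
have cl_branch k : closure (cyl (n + k)%N (branch k)) x.
  by elim: k => [|k IH]; [rewrite addn0 | rewrite addnS; exact: nextP].
have branch_stable k m : prefix_eq (n + k) (branch k) (branch (k + m)%N).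
  elim: m => [|m IH] i ilt; first by rewrite addn0.
  rewrite addnS /= /set_digit IH // ltn_eqF //.
  by apply: leq_trans ilt _; rewrite leq_add2l leq_addr.
pose d i := branch i.+1 i.
have branch_d k : prefix_eq (n + k) (branch k) d.
  move=> i ilt; rewrite /d (branch_stable k i.+1 i ilt) addnC.
  by rewrite -(branch_stable i.+1 k i) // addnS ltnS leq_addl.
exists d => [|m]; first by have := branch_d 0%N; rewrite addn0.
have /closureS : cyl (n + m) d `<=` cyl m d by exact: cyl_le (leq_addl n m).
by apply; rewrite -(cyl_prefix_eq (branch_d m)).
Qed.

Lemma closure_all_cyl d x : (forall m, closure (cyl m d) x) -> x = g d.
Proof.
move=> cl; apply: contrapT => xd.
have e0 : 0 < `|x - g d| / 2 by rewrite divr_gt0 // normr_gt0 subr_eq0; apply/eqP.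
have [m near_d] := encoding_prefix_continuous d e0.
have [_ [[b db <-] xb]] := cl m _ (nbhsx_ballx x _ e0).
have := near_d b db; have := ler_distD (g b) x (g d).
move: xb; rewrite -ball_normE /= (distrC (g b)).
set z := `|x - g d|; lra.
Qed.

Lemma closed_cyl n a : closed (cyl n a).
Proof. by move=> x /closure_cyl_branch [d ad /closure_all_cyl ->]; exists d. Qed.

Lemma near_codes_prefix a N : \forall y \near g a,
  forall b, g b = y -> exists2 t, g t = g a & prefix_eq N t b.
Proof.
pose ext (c : {ffun 'I_N -> 'I_s}) : Lseq s :=
  fun i => if insub i is Some k then c k else a i.
have near_c c : \forall y \near g a, cyl N (ext c) y -> cyl N (ext c) (g a).
  have [inc|notin] := pselect (cyl N (ext c) (g a)); first by apply: filterE.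
  apply: filterS (open_nbhs_nbhs (conj (closed_openC (@closed_cyl N (ext c))) notin)).
  by move=> y ncy cy.
have := filter_forall (nbhs_filter (g a)) near_c; apply: filterS => y near_y b gby.
have ext_b : prefix_eq N (ext [ffun k => b (val k)]) b.
  by move=> i iN; rewrite /ext insubT /= ffunE.
have [t ct gt] : cyl N (ext [ffun k => b (val k)]) (g a) by apply: near_y; exists b.
by exists t => // i iN; rewrite -ct // ext_b.
Qed.

Lemma prefix_continuous_on_codes (h : Lseq s -> R) : prefix_continuous h ->
  forall a e, 0 < e ->
  exists N, forall t b, g t = g a -> prefix_eq N t b -> `|h t - h b| < e.
Proof.
move=> hc a e e0.
have [a' codes] : exists a', forall t, g t = g a -> t = a \/ t = a'.
  have [[a' a'a ga']|single] := pselect (exists2 a', a' <> a & g a' = g a).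
    exists a' => t gt.
    by have [|[|a_a']] := g_two_codes gt (esym ga'); [left|right|case: a'a].
  by exists a => t gt; left; apply: contrapT => ta; apply: single; exists t.
have [Na hNa] := hc a e e0; have [Na' hNa'] := hc a' e e0.
exists (maxn Na Na') => t b /codes [->|->] tb.
- by apply: hNa; exact: prefix_eq_le (leq_maxl _ _) tb.
- by apply: hNa'; exact: prefix_eq_le (leq_maxr _ _) tb.
Qed.

End Cylinders.

Theorem theorem1 (R : realType) (s r : nat) (hs : (2 <= s)%N) (hr : (2 <= r)%N)
  (g1 : Lseq s -> R) (g2 : Lseq r -> R)
  (enc1 : encoding g1) (zr1 : zero_redundancy g1) (ce1 : continuous_encoding g1)
  (enc2 : encoding g2) (zr2 : zero_redundancy g2) (ce2 : continuous_encoding g2)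
  (phi : forall n : nat, n.+1.-tuple 'I_s -> 'I_r) :
  (exists psi : R -> R,
      (forall a : Lseq s, psi (g1 a) = g2 (digit_map phi a)) /\
      {within `[0, 1], continuous psi})
  <->
  (forall x : R, g_binary g1 x ->
     forall a b : Lseq s, g1 a = x -> g1 b = x ->
       g2 (digit_map phi a) = g2 (digit_map phi b)).
Proof.
split=> [[psi [psiP _]] x _ a b ga gb|wd]; first by rewrite -!psiP ga gb.
have [psi psiP] : exists psi : R -> R, forall a, psi (g1 a) = g2 (digit_map phi a).
  apply: (exists_factor 0) => a b gab.
  have [->//|ab] := pselect (a = b).
  by apply: (wd (g1 a)) => //; exists a, b.
exists psi; split=> //.
have [[two1 _] [int1 _]] := (zr1, ce1); have [[two2 _] [int2 _]] := (zr2, ce2).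
have h_cont := prefix_continuous_digit_map phi (encoding_prefix_continuous two2 int2).
apply/subspace_continuousP => x; rewrite /= in_itv => x01.
have [a <-] := enc1.2 x x01.
apply/cvgrPdist_lt => e e0.
have [N codesN] := prefix_continuous_on_codes two1 h_cont a e0.
rewrite near_withinE; apply: filterS (near_codes_prefix two1 int1 a N) => y near_y.
rewrite /= in_itv => y01; have [b gb] := enc1.2 y y01.
have [t gt tb] := near_y b gb.
by rewrite /from_subspace -gb -gt !psiP; exact: codesN.
Qed.
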